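(* Let $\varepsilon\in(0,\tfrac12)$ and let $W_n=W_n^{\varepsilon}$ be the weighted diamonds defined below. Then there is a constant $C(\varepsilon)<\infty$ such that for every $n\ge 0$ the metric space $V(W_n)$ (with weighted shortest path distance) admits a bilipschitz embedding into $\ell_2$ with distortion at most $C(\varepsilon)$.
   Context: Diamonds: $D_0$ is an edge; $D_i$ is obtained from $D_{i-1}$ by replacing each edge $uv$ by a quadrilateral $u,a,v,b$ (so $V(D_{i-1})\subseteq V(D_i)$ and the edges of $D_{i-1}$ are not edges of $D_i$). Weighted diamonds: $W_0=D_0$ with its edge of weight $1$; for $n\ge1$, $W_n$ has vertex set $V(D_n)$ and edge set $E(W_{n-1})\cup E(D_n)$, where edges of $W_{n-1}$ keep their weights and each edge of $D_n$ gets weight $(\tfrac12+\varepsilon)^n$. Thus $W_n$ has all edges of $D_0,D_1,\dots,D_n$, the edges of $D_j$ having weight $(\tfrac12+\varepsilon)^j$. $W_n$ carries the weighted shortest path metric. *)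

From Stdlib Require Import Reals List.
Import ListNotations.
Open Scope R_scope.

(* The four edges of the quadrilateral u,a,v,b replacing an edge uv:
   Q_ua = u-a, Q_av = a-v, Q_vb = v-b, Q_bu = b-u. *)
Inductive quad := Q_ua | Q_av | Q_vb | Q_bu.

Fixpoint Etype (n : nat) : Type :=
  match n with
  | O => unit
  | S m => (Etype m * quad)%type
  end.

(* Vertices of D_n: either a vertex of D_(n-1) (so V(D_(n-1)) ⊆ V(D_n)),
   or a new vertex a (false) / b (true) created on an edge of D_(n-1).
   D_0 has the two vertices false, true. *)
Fixpoint Vtype (n : nat) : Type :=
  match n with
  | O => bool
  | S m => (Vtype m + (Etype m * bool))%type
  end.

Fixpoint ends (n : nat) : Etype n -> Vtype n * Vtype n :=
  match n as n0 return Etype n0 -> Vtype n0 * Vtype n0 with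
  | O => fun _ => (false, true)
  | S m => fun eq =>
      let (e, q) := eq in
      let (u, v) := ends m e in
      match q with
      | Q_ua => (inl u, inr (e, false))
      | Q_av => (inr (e, false), inl v)
      | Q_vb => (inl v, inr (e, true))
      | Q_bu => (inr (e, true), inl u)
      end
  end.

Fixpoint Elist (n : nat) : list (Etype n) :=
  match n as n0 return list (Etype n0) with
  | O => [tt]
  | S m => flat_map (fun e => [(e, Q_ua); (e, Q_av); (e, Q_vb); (e, Q_bu)]) (Elist m)
  end.

Fixpoint WE (eps : R) (n : nat) : list (Vtype n * Vtype n * R) :=
  match n as n0 return list (Vtype n0 * Vtype n0 * R) with
  | O => [(false, true, 1)]
  | S m =>
      map (fun t : Vtype m * Vtype m * R =>
             let '(u, v, w) := t in ((inl u : Vtype (S m)), (inl v : Vtype (S m)), w))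
          (WE eps m)
      ++ map (fun e => let (u, v) := ends (S m) e in (u, v, (/2 + eps) ^ (S m)))
             (Elist (S m))
  end.

Inductive walk (eps : R) (n : nat) : Vtype n -> Vtype n -> R -> Prop :=
  | walk_nil : forall x, walk eps n x x 0
  | walk_cons : forall x y z w L,
      (In (x, y, w) (WE eps n) \/ In (y, x, w) (WE eps n)) ->
      walk eps n y z L -> walk eps n x z (w + L).

Definition is_dist (eps : R) (n : nat) (x y : Vtype n) (d : R) : Prop :=
  (forall L, walk eps n x y L -> d <= L) /\
  (forall e, 0 < e -> exists L, walk eps n x y L /\ L < d + e).

Definition in_l2 (x : nat -> R) : Prop :=
  exists l, infinite_sum (fun i => (x i) ^ 2) l.

Definition l2_sqdist (x y : nat -> R) (S : R) : Prop :=
  infinite_sum (fun i => (x i - y i) ^ 2) S.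

From Stdlib Require Import Reals List Lra Lia.
From Stdlib Require Import FinFun Classical_Prop Program.Equality.
Import ListNotations.
Open Scope R_scope.

(* Write r = 1/2 + eps, so that 1/2 < r < 1 and the edges of D_i weigh r^i in W_n.
   A point of the metric graph D_m is a vertex or a point t*u + (1-t)*v of an edge uv;
   [bary] is its barycentric vector in R^V(D_m).  The map [collapse] : D_(m+1) -> D_m
   folds each quadrilateral u,a,v,b onto the edge uv it replaced (a and b go to the
   midpoint of uv).  A vertex x of W_n is embedded as the concatenation, over the levels
   m = n, ..., 0, of r^m times the barycentric vector of the image of x in D_m.

   Collapsing halves parameter differences along an edge while the level
   weight only shrinks by r > 1/2, so two points of one edge of D_m at parameters t, t'
   are at squared embedded distance <= c(r) (t - t')^2 r^(2m) ([cell_bound]).  Adding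
   the contributions of the levels above, an edge of weight r^i is stretched by at most
   sqrt K(r) ([edge_lipschitz]); by the triangle inequality so is every walk.

   Follow the images ("shadows") of x and y down the levels and let i be
   the last level at which their supports are still disjoint ([separation_level]).  That
   level alone contributes r^(2i)/2 to the squared distance ([separated_level_far]),
   while one level lower (or through the root edge, if i = 0) the shadows meet, which
   yields a walk from x to y of length <= 2 r^i / (1 - r), because every support vertex
   of a shadow at level m lies within r^(m+1)/(1-r) of the vertex ([shadow_support_near]). *)

Definition quad_eq_dec (a b : quad) : {a = b} + {a <> b}.
Proof. decide equality. Defined.

Definition Etype_eq_dec (n : nat) : forall a b : Etype n, {a = b} + {a <> b}.
Proof.
  induction n as [|n IH]; simpl.
  - intros [] []. left. reflexivity.
  - decide equality; auto using quad_eq_dec.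
Defined.

Definition Vtype_eq_dec (n : nat) : forall a b : Vtype n, {a = b} + {a <> b}.
Proof.
  induction n as [|n IH]; simpl.
  - exact Bool.bool_dec.
  - decide equality; try decide equality; auto using Etype_eq_dec, Bool.bool_dec.
Defined.

Lemma NoDup_flat_map {A B : Type} (f : A -> list B) (l : list A) :
  NoDup l -> (forall a, NoDup (f a)) ->
  (forall a a' b, In b (f a) -> In b (f a') -> a = a') ->
  NoDup (flat_map f l).
Proof.
  induction 1 as [|a l Hnotin Hl IH]; intros Hf Hdisj; simpl; [constructor|].
  apply NoDup_app; auto.
  intros b Hb Hb'. apply in_flat_map in Hb' as [a' [Ha' Hb']].
  rewrite (Hdisj _ _ _ Hb Hb') in Hnotin. contradiction.
Qed.

Lemma Elist_complete n (e : Etype n) : In e (Elist n).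
Proof.
  induction n as [|n IH]; simpl.
  - destruct e. auto.
  - destruct e as [e q]. apply in_flat_map. exists e.
    split; [apply IH|destruct q; simpl; tauto].
Qed.

Lemma Elist_NoDup n : NoDup (Elist n).
Proof.
  induction n as [|n IH]; simpl.
  - repeat constructor. auto.
  - apply NoDup_flat_map; auto.
    + intros e. repeat constructor; simpl; intuition discriminate.
    + intros e e' b He He'. simpl in *. intuition (subst; congruence).
Qed.

Fixpoint Vlist (n : nat) : list (Vtype n) :=
  match n as n0 return list (Vtype n0) with
  | O => [false; true]
  | S m => map (fun z => (inl z : Vtype (S m))) (Vlist m) ++
           flat_map (fun e => [(inr (e, false) : Vtype (S m)); inr (e, true)]) (Elist m)
  end.

Lemma Vlist_complete n (z : Vtype n) : In z (Vlist n).
Proof.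
  induction n as [|n IH]; simpl.
  - destruct z; auto.
  - apply in_or_app. destruct z as [z|[e s]].
    + left. apply in_map. apply IH.
    + right. apply in_flat_map. exists e.
      split; [apply Elist_complete|destruct s; simpl; auto].
Qed.

Lemma Vlist_NoDup n : NoDup (Vlist n).
Proof.
  induction n as [|n IH]; simpl.
  - repeat constructor; simpl; intuition discriminate.
  - apply NoDup_app.
    + apply Injective_map_NoDup; auto. intros a b E. injection E. auto.
    + apply NoDup_flat_map; [apply Elist_NoDup| |].
      * intros e. repeat constructor; simpl; intuition discriminate.
      * intros e e' b He He'. simpl in *. intuition (subst; congruence).
    + intros b Hb Hb'. apply in_map_iff in Hb as [z [<- _]].
      apply in_flat_map in Hb' as [e [_ He]]. simpl in He. intuition discriminate.
Qed.

Fixpoint sqd (l1 l2 : list R) : R :=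
  match l1, l2 with
  | a :: l1', b :: l2' => (a - b) ^ 2 + sqd l1' l2'
  | _, _ => 0
  end.

Lemma sqd_nonneg l1 l2 : 0 <= sqd l1 l2.
Proof.
  revert l2; induction l1 as [|a l1 IH]; intros [|b l2]; simpl; try lra.
  pose proof (IH l2). pose proof (pow2_ge_0 (a - b)). lra.
Qed.

Lemma sqd_diag l : sqd l l = 0.
Proof. induction l as [|a l IH]; simpl; [reflexivity|]. rewrite IH. ring. Qed.

Lemma sqd_sym l1 l2 : sqd l1 l2 = sqd l2 l1.
Proof. revert l2; induction l1; intros [|b l2]; simpl; auto. rewrite IHl1. ring. Qed.

Lemma sqd_app l1 l1' l2 l2' : length l1 = length l1' ->
  sqd (l1 ++ l2) (l1' ++ l2') = sqd l1 l1' + sqd l2 l2'.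
Proof.
  revert l1'; induction l1 as [|a l1 IH]; intros [|b l1'] Hlen; simpl in *;
    try discriminate; [ring|]. rewrite IH by lia. ring.
Qed.

Lemma cauchy_schwarz2 a b c d : a * b + c * d <= sqrt ((a ^ 2 + c ^ 2) * (b ^ 2 + d ^ 2)).
Proof.
  destruct (Rle_lt_dec (a * b + c * d) 0) as [Hle|Hpos].
  - pose proof (sqrt_pos ((a ^ 2 + c ^ 2) * (b ^ 2 + d ^ 2))). lra.
  - rewrite <- (sqrt_pow2 (a * b + c * d)) by lra. apply sqrt_le_1_alt.
    pose proof (pow2_ge_0 (a * d - b * c)). nra.
Qed.

Lemma minkowski2 a b c d :
  sqrt ((a + b) ^ 2 + (c + d) ^ 2) <= sqrt (a ^ 2 + c ^ 2) + sqrt (b ^ 2 + d ^ 2).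
Proof.
  pose proof (pow2_ge_0 a); pose proof (pow2_ge_0 b).
  pose proof (pow2_ge_0 c); pose proof (pow2_ge_0 d).
  pose proof (sqrt_pos (a ^ 2 + c ^ 2)); pose proof (sqrt_pos (b ^ 2 + d ^ 2)).
  rewrite <- (sqrt_pow2 (sqrt (a ^ 2 + c ^ 2) + sqrt (b ^ 2 + d ^ 2))) by lra.
  apply sqrt_le_1_alt.
  replace ((sqrt (a ^ 2 + c ^ 2) + sqrt (b ^ 2 + d ^ 2)) ^ 2)
    with (sqrt (a ^ 2 + c ^ 2) ^ 2 + sqrt (b ^ 2 + d ^ 2) ^ 2
          + 2 * (sqrt (a ^ 2 + c ^ 2) * sqrt (b ^ 2 + d ^ 2))) by ring.
  rewrite !pow2_sqrt, <- sqrt_mult by lra.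
  pose proof (cauchy_schwarz2 a b c d). nra.
Qed.

Lemma sqd_triangle l1 l2 l3 : length l1 = length l2 -> length l2 = length l3 ->
  sqrt (sqd l1 l3) <= sqrt (sqd l1 l2) + sqrt (sqd l2 l3).
Proof.
  revert l2 l3; induction l1 as [|a l1 IH]; intros [|b l2] [|c l3] H12 H23;
    cbn [sqd length] in *; try discriminate.
  - rewrite sqrt_0. lra.
  - assert (IH' := IH l2 l3 ltac:(lia) ltac:(lia)).
    assert (Hm := minkowski2 (a - b) (b - c) (sqrt (sqd l1 l2)) (sqrt (sqd l2 l3))).
    rewrite !pow2_sqrt in Hm by apply sqd_nonneg.
    replace (a - b + (b - c)) with (a - c) in Hm by ring.
    eapply Rle_trans; [|exact Hm].
    apply sqrt_le_1_alt, Rplus_le_compat_l.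
    rewrite <- (pow2_sqrt (sqd l1 l3)) by apply sqd_nonneg.
    apply pow_incr. split; [apply sqrt_pos|exact IH'].
Qed.

Definition lsum {A : Type} (f : A -> R) (l : list A) : R :=
  fold_right (fun z acc => f z + acc) 0 l.

Lemma lsum_nonneg {A : Type} (f : A -> R) l : (forall z, 0 <= f z) -> 0 <= lsum f l.
Proof. intros Hf. induction l as [|a l IH]; simpl; [lra|]. pose proof (Hf a). lra. Qed.

Lemma lsum_le {A : Type} (f g : A -> R) l : (forall z, f z <= g z) -> lsum f l <= lsum g l.
Proof. intros Hfg. induction l as [|a l IH]; simpl; [lra|]. pose proof (Hfg a). lra. Qed.

Lemma lsum_plus {A : Type} (f g : A -> R) l :
  lsum (fun z => f z + g z) l = lsum f l + lsum g l.
Proof. induction l as [|a l IH]; simpl; [ring|]. rewrite IH. ring. Qed.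

Lemma lsum_scal {A : Type} (c : R) (f : A -> R) l :
  lsum (fun z => c * f z) l = c * lsum f l.
Proof. induction l as [|a l IH]; simpl; [ring|]. rewrite IH. ring. Qed.

Lemma lsum_ge_term {A : Type} (f : A -> R) l u :
  (forall z, 0 <= f z) -> In u l -> f u <= lsum f l.
Proof.
  intros Hf Hu. induction l as [|a l IH]; simpl in *; [tauto|].
  pose proof (lsum_nonneg f l Hf). pose proof (Hf a).
  destruct Hu as [->|Hu]; [lra|]. specialize (IH Hu). lra.
Qed.

Lemma lsum_ge_two_terms {A : Type} (f : A -> R) l u v :
  (forall z, 0 <= f z) -> In u l -> In v l -> u <> v -> f u + f v <= lsum f l.
Proof.
  intros Hf Hu Hv Huv. induction l as [|a l IH]; simpl in *; [tauto|].
  pose proof (Hf a).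
  destruct Hu as [->|Hu], Hv as [->|Hv]; try tauto.
  - pose proof (lsum_ge_term f l v Hf Hv). lra.
  - pose proof (lsum_ge_term f l u Hf Hu). lra.
  - specialize (IH Hu Hv). lra.
Qed.

Lemma sqd_scaled_map {A : Type} (c : R) (a b : A -> R) (l : list A) :
  sqd (map (fun z => c * a z) l) (map (fun z => c * b z) l)
  = c ^ 2 * lsum (fun z => (a z - b z) ^ 2) l.
Proof.
  unfold lsum. induction l as [|z l IH]; cbn [map sqd fold_right]; [ring|].
  rewrite IH. ring.
Qed.

Lemma walk_app eps n x y z L1 L2 :
  walk eps n x y L1 -> walk eps n y z L2 -> walk eps n x z (L1 + L2).
Proof.
  induction 1 as [x|x y' z' w L Hxy _ IH]; intros Hyz.
  - rewrite Rplus_0_l. exact Hyz.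
  - rewrite Rplus_assoc. econstructor; eauto.
Qed.

Lemma walk_edge eps n x y w :
  In (x, y, w) (WE eps n) \/ In (y, x, w) (WE eps n) -> walk eps n x y w.
Proof.
  intros Hxy. rewrite <- (Rplus_0_r w). econstructor; [exact Hxy|constructor].
Qed.

Lemma walk_rev eps n x y L : walk eps n x y L -> walk eps n y x L.
Proof.
  induction 1 as [x|x y z w L Hxy _ IH]; [constructor|].
  rewrite Rplus_comm. eapply walk_app; [exact IH|]. apply walk_edge. tauto.
Qed.

Lemma WE_lift eps m x y w : In (x, y, w) (WE eps m) ->
  In ((inl x : Vtype (S m)), (inl y : Vtype (S m)), w) (WE eps (S m)).
Proof.
  intros Hxy. cbn [WE]. apply in_or_app. left.
  exact (in_map (fun t : Vtype m * Vtype m * R =>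
           let '(u, v, w) := t in ((inl u : Vtype (S m)), (inl v : Vtype (S m)), w)) _ _ Hxy).
Qed.

Lemma walk_lift eps m a b L : walk eps m a b L -> walk eps (S m) (inl a) (inl b) L.
Proof.
  induction 1 as [x|x y z w L Hxy _ IH]; [constructor|].
  econstructor; [|exact IH]. destruct Hxy; [left|right]; apply WE_lift; assumption.
Qed.

Lemma WE_Dn eps n e : In (fst (ends n e), snd (ends n e), (/ 2 + eps) ^ n) (WE eps n).
Proof.
  destruct n as [|m]; [simpl; auto|].
  cbn [WE]. apply in_or_app. right. apply in_map_iff. exists e.
  split; [destruct (ends (S m) e); reflexivity|apply Elist_complete].
Qed.

Lemma WE_0 eps x y w : In (x, y, w) (WE eps 0) -> ends 0 tt = (x, y) /\ w = (/ 2 + eps) ^ 0.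
Proof. simpl. intros [E|[]]. injection E as <- <- <-. auto. Qed.

Lemma WE_S eps m x y w : In (x, y, w) (WE eps (S m)) ->
  (exists x' y', x = inl x' /\ y = inl y' /\ In (x', y', w) (WE eps m)) \/
  (exists e, ends (S m) e = (x, y) /\ w = (/ 2 + eps) ^ S m).
Proof.
  cbn [WE]. intros [Hold|Hnew]%in_app_or.
  - left. apply in_map_iff in Hold as [[[u v] w'] [E Huv]].
    injection E as <- <- <-. eauto.
  - right. apply in_map_iff in Hnew as [e [E _]]. exists e.
    destruct (ends (S m) e). injection E as <- <- <-. auto.
Qed.

Lemma ends_S m e q : ends (S m) (e, q) =
  match q with
  | Q_ua => (inl (fst (ends m e)), inr (e, false))
  | Q_av => (inr (e, false), inl (snd (ends m e)))
  | Q_vb => (inl (snd (ends m e)), inr (e, true))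
  | Q_bu => (inr (e, true), inl (fst (ends m e)))
  end.
Proof. simpl. destruct (ends m e). destruct q; reflexivity. Qed.

Lemma ends_distinct m e : fst (ends m e) <> snd (ends m e).
Proof.
  destruct m as [|m]; simpl; [discriminate|].
  destruct e as [e q]. destruct (ends m e). destruct q; simpl; discriminate.
Qed.

(* A point of the metric graph D_m: a vertex, or the point t*u + (1-t)*v of an edge with
   ends (u, v). *)
Inductive point (m : nat) : Type :=
  | Vert (x : Vtype m)
  | OnEdge (e : Etype m) (t : R).
Arguments Vert {m} x.
Arguments OnEdge {m} e t.

Definition ind (m : nat) (u z : Vtype m) : R := if Vtype_eq_dec m z u then 1 else 0.

Lemma ind_same m u : ind m u u = 1.
Proof. unfold ind. destruct (Vtype_eq_dec m u u); tauto. Qed.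

Lemma ind_other m u z : z <> u -> ind m u z = 0.
Proof. unfold ind. destruct (Vtype_eq_dec m z u); tauto. Qed.

Lemma ind_01 m u z : ind m u z = 0 \/ ind m u z = 1.
Proof. unfold ind. destruct (Vtype_eq_dec m z u); auto. Qed.

Lemma lsum_ind_le1 m u l : NoDup l -> lsum (ind m u) l <= 1.
Proof.
  induction 1 as [|a l Ha Hl IH]; simpl; [lra|].
  destruct (Vtype_eq_dec m a u) as [->|Hau].
  - assert (Hzero : lsum (ind m u) l = 0).
    { clear -Ha. induction l as [|b l IHl]; simpl in *; [reflexivity|].
      rewrite ind_other, IHl by tauto. ring. }
    rewrite ind_same, Hzero. lra.
  - rewrite ind_other by exact Hau. lra.
Qed.

Definition bary (m : nat) (p : point m) (z : Vtype m) : R :=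
  match p with
  | Vert x => ind m x z
  | OnEdge e t => t * ind m (fst (ends m e)) z + (1 - t) * ind m (snd (ends m e)) z
  end.

Definition supp (m : nat) (p : point m) (z : Vtype m) : Prop :=
  match p with
  | Vert x => z = x
  | OnEdge e _ => z = fst (ends m e) \/ z = snd (ends m e)
  end.

Definition share (m : nat) (p p' : point m) : Prop := exists z, supp m p z /\ supp m p' z.

Lemma bary_out m p z : ~ supp m p z -> bary m p z = 0.
Proof.
  destruct p; simpl; intros Hz.
  - apply ind_other. exact Hz.
  - rewrite !ind_other by tauto. ring.
Qed.

Lemma supp_inhabited m (p : point m) : exists z, supp m p z.
Proof. destruct p; simpl; eauto. Qed.

(* Parameter on uv of the point at parameter t of the sub-edge q of uv. *)
Definition collapse_param (q : quad) (t : R) : R :=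
  match q with
  | Q_ua => (1 + t) / 2
  | Q_av => t / 2
  | Q_vb => (1 - t) / 2
  | Q_bu => 1 - t / 2
  end.

Definition collapse (m : nat) (p : point (S m)) : point m :=
  match p with
  | Vert (inl z) => Vert z
  | Vert (inr (e, _)) => OnEdge e (/ 2)
  | OnEdge (e, q) t => OnEdge e (collapse_param q t)
  end.

Definition level_coords (r : R) (m : nat) (p : point m) : list R :=
  map (fun z => r ^ m * bary m p z) (Vlist m).

Fixpoint coords (r : R) (m : nat) : point m -> list R :=
  match m return point m -> list R with
  | O => level_coords r 0
  | S m' => fun p => level_coords r (S m') p ++ coords r m' (collapse m' p)
  end.

Definition level_sqd (m : nat) (p p' : point m) : R :=
  lsum (fun z => (bary m p z - bary m p' z) ^ 2) (Vlist m).

Definition emb_sqd (r : R) (m : nat) (p p' : point m) : R :=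
  sqd (coords r m p) (coords r m p').

Lemma coords_length r m (p p' : point m) : length (coords r m p) = length (coords r m p').
Proof.
  revert p p'; induction m as [|m IH]; intros p p'; [reflexivity|].
  simpl. unfold level_coords. rewrite !length_app, !length_map, (IH _ (collapse m p')).
  reflexivity.
Qed.

Lemma sqd_level_coords r m p p' :
  sqd (level_coords r m p) (level_coords r m p') = (r ^ m) ^ 2 * level_sqd m p p'.
Proof. apply sqd_scaled_map. Qed.

Lemma emb_sqd_0 r (p p' : point 0) : emb_sqd r 0 p p' = (r ^ 0) ^ 2 * level_sqd 0 p p'.
Proof. apply sqd_level_coords. Qed.

Lemma emb_sqd_S r m (p p' : point (S m)) :
  emb_sqd r (S m) p p'
  = (r ^ S m) ^ 2 * level_sqd (S m) p p' + emb_sqd r m (collapse m p) (collapse m p').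
Proof.
  unfold emb_sqd. simpl. rewrite sqd_app, sqd_level_coords; [reflexivity|].
  unfold level_coords. rewrite !length_map. reflexivity.
Qed.

Lemma level_sqd_nonneg m p p' : 0 <= level_sqd m p p'.
Proof. apply lsum_nonneg. intros z. apply pow2_ge_0. Qed.

Lemma emb_sqd_nonneg r m p p' : 0 <= emb_sqd r m p p'.
Proof. apply sqd_nonneg. Qed.

Lemma emb_sqd_ge_level r m p p' : (r ^ m) ^ 2 * level_sqd m p p' <= emb_sqd r m p p'.
Proof.
  destruct m as [|m].
  - rewrite emb_sqd_0. lra.
  - rewrite emb_sqd_S. pose proof (emb_sqd_nonneg r m (collapse m p) (collapse m p')). lra.
Qed.

Lemma emb_sqd_collapse_le r m p p' :
  emb_sqd r m (collapse m p) (collapse m p') <= emb_sqd r (S m) p p'.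
Proof.
  rewrite emb_sqd_S. pose proof (level_sqd_nonneg (S m) p p').
  pose proof (pow2_ge_0 (r ^ S m)). nra.
Qed.

Lemma emb_sqd_triangle r m p p' p'' :
  sqrt (emb_sqd r m p p'') <= sqrt (emb_sqd r m p p') + sqrt (emb_sqd r m p' p'').
Proof. apply sqd_triangle; apply coords_length. Qed.

Lemma level_sqd_two_atoms m p p' u v a b :
  (forall z, bary m p z - bary m p' z = a * ind m u z + b * ind m v z) ->
  level_sqd m p p' <= 2 * a ^ 2 + 2 * b ^ 2.
Proof.
  intros Hdiff. unfold level_sqd.
  apply Rle_trans with (lsum (fun z => 2 * a ^ 2 * ind m u z + 2 * b ^ 2 * ind m v z) (Vlist m)).
  - apply lsum_le. intros z. rewrite Hdiff.
    pose proof (pow2_ge_0 a); pose proof (pow2_ge_0 b); pose proof (pow2_ge_0 (a - b)).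
    destruct (ind_01 m u z) as [-> | ->], (ind_01 m v z) as [-> | ->]; nra.
  - rewrite lsum_plus, !lsum_scal.
    pose proof (lsum_ind_le1 m u _ (Vlist_NoDup m)).
    pose proof (lsum_ind_le1 m v _ (Vlist_NoDup m)).
    pose proof (pow2_ge_0 a); pose proof (pow2_ge_0 b). nra.
Qed.

Lemma level_sqd_vertices m x y : level_sqd m (Vert x) (Vert y) <= 4.
Proof.
  pose proof (level_sqd_two_atoms m (Vert x) (Vert y) x y 1 (-1)) as H.
  lapply H; [lra|]. intros z. simpl. ring.
Qed.

Lemma level_sqd_disjoint m p p' : ~ share m p p' -> / 2 <= level_sqd m p p'.
Proof.
  intros Hsep. unfold level_sqd.
  assert (Hsq : forall z, 0 <= (bary m p z - bary m p' z) ^ 2) by (intros; apply pow2_ge_0).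
  assert (Hout : forall z, supp m p z -> bary m p' z = 0)
    by (intros z Hz; apply bary_out; intros Hz'; apply Hsep; exists z; auto).
  destruct p as [x|e t].
  - eapply Rle_trans; [|apply (lsum_ge_term _ _ x Hsq (Vlist_complete m x))].
    simpl. rewrite ind_same, Hout by reflexivity. lra.
  - set (u := fst (ends m e)). set (v := snd (ends m e)).
    assert (Huv : u <> v) by apply ends_distinct.
    eapply Rle_trans;
      [|apply (lsum_ge_two_terms _ _ u v Hsq (Vlist_complete m u) (Vlist_complete m v) Huv)].
    simpl. fold u v. rewrite !ind_same, (ind_other m v u), (ind_other m u v), !Hout
      by (simpl; auto).
    pose proof (pow2_ge_0 (t - / 2)). nra.
Qed.

Definition on_edge (m : nat) (p : point m) (e : Etype m) (t : R) : Prop :=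
  p = OnEdge e t \/
  (p = Vert (fst (ends m e)) /\ t = 1) \/
  (p = Vert (snd (ends m e)) /\ t = 0).

Lemma bary_on_edge m p e t : on_edge m p e t ->
  forall z, bary m p z = t * ind m (fst (ends m e)) z + (1 - t) * ind m (snd (ends m e)) z.
Proof. intros [->|[[-> ->]|[-> ->]]] z; simpl; ring. Qed.

Lemma collapse_on_edge m p e q t :
  on_edge (S m) p (e, q) t -> on_edge m (collapse m p) e (collapse_param q t).
Proof.
  unfold on_edge. rewrite ends_S.
  intros [->|[[-> ->]|[-> ->]]]; [left; reflexivity| |];
    destruct q; simpl; unfold collapse_param;
    first [ left; f_equal; field
          | right; left; split; [reflexivity|field]
          | right; right; split; [reflexivity|field] ].
Qed.

Lemma collapse_param_diff q t t' :
  (collapse_param q t - collapse_param q t') ^ 2 = (t - t') ^ 2 / 4.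
Proof. destruct q; simpl; field. Qed.

Lemma level_sqd_on_edge m p p' e t t' : on_edge m p e t -> on_edge m p' e t' ->
  level_sqd m p p' <= 4 * (t - t') ^ 2.
Proof.
  intros Hp Hp'.
  assert (H := level_sqd_two_atoms m p p' (fst (ends m e)) (snd (ends m e)) (t - t') (t' - t)).
  lapply H; [intros Hle; replace ((t' - t) ^ 2) with ((t - t') ^ 2) in Hle by ring; lra|].
  intros z. rewrite (bary_on_edge _ _ _ _ Hp), (bary_on_edge _ _ _ _ Hp'). ring.
Qed.

(* c(r) = 16 r^2 / (4 r^2 - 1) solves c r^2 = 4 r^2 + c / 4, the recursion of [cell_bound]. *)
Definition cell_const (r : R) : R := 16 * r ^ 2 / (4 * r ^ 2 - 1).

Lemma cell_const_rec r : / 2 < r -> cell_const r * r ^ 2 = 4 * r ^ 2 + cell_const r / 4.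
Proof. intros Hr. unfold cell_const. field. nra. Qed.

Lemma cell_const_ge4 r : / 2 < r -> 4 <= cell_const r.
Proof.
  intros Hr. unfold cell_const.
  replace (16 * r ^ 2 / (4 * r ^ 2 - 1)) with (4 + 4 / (4 * r ^ 2 - 1)) by (field; nra).
  assert (0 < 4 / (4 * r ^ 2 - 1)) by (apply Rdiv_lt_0_compat; nra). lra.
Qed.

(* Two points of one edge of D_m are at squared embedded distance <= c(r) (t - t')^2 r^(2m):
   the top level contributes 4 (t - t')^2 r^(2m), and the collapsed points satisfy the
   bound one level down with (t - t')^2 / 4. *)
Lemma cell_bound r m p p' e t t' : / 2 < r -> on_edge m p e t -> on_edge m p' e t' ->
  emb_sqd r m p p' <= cell_const r * (t - t') ^ 2 * (r ^ m) ^ 2.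
Proof.
  intros Hr. revert p p' e t t'.
  pose proof (cell_const_ge4 r Hr) as Hc4. pose proof (cell_const_rec r Hr) as Hrec.
  induction m as [|m IH]; intros p p' e t t' Hp Hp'.
  - rewrite emb_sqd_0. pose proof (level_sqd_on_edge _ _ _ _ _ _ Hp Hp').
    pose proof (pow2_ge_0 (t - t')). simpl. nra.
  - destruct e as [e q]. rewrite emb_sqd_S.
    pose proof (level_sqd_on_edge _ _ _ _ _ _ Hp Hp') as Hlevel.
    pose proof (IH _ _ _ _ _ (collapse_on_edge _ _ _ _ _ Hp) (collapse_on_edge _ _ _ _ _ Hp'))
      as Hlow.
    rewrite collapse_param_diff in Hlow.
    replace ((r ^ S m) ^ 2) with (r ^ 2 * (r ^ m) ^ 2) by (simpl; ring).
    pose proof (pow2_ge_0 (r ^ m)); pose proof (pow2_ge_0 r); pose proof (pow2_ge_0 (t - t')).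
    assert (r ^ 2 * (r ^ m) ^ 2 * level_sqd (S m) p p' <= r ^ 2 * (r ^ m) ^ 2 * (4 * (t - t') ^ 2))
      by (apply Rmult_le_compat_l; [nra|exact Hlevel]).
    replace (cell_const r * (t - t') ^ 2 * (r ^ 2 * (r ^ m) ^ 2))
      with (cell_const r * r ^ 2 * ((t - t') ^ 2 * (r ^ m) ^ 2)) by ring.
    rewrite Hrec. lra.
Qed.

Lemma Dn_edge_bound r n e : / 2 < r ->
  emb_sqd r n (Vert (fst (ends n e))) (Vert (snd (ends n e))) <= cell_const r * (r ^ n) ^ 2.
Proof.
  intros Hr.
  assert (H := cell_bound r n _ _ e 1 0 Hr ltac:(right; left; auto) ltac:(right; right; auto)).
  replace ((1 - 0) ^ 2) with 1 in H by ring. lra.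
Qed.

Inductive shadows (n : nat) (x y : Vtype n) : forall m, point m -> point m -> Prop :=
  | shadows_top : shadows n x y n (Vert x) (Vert y)
  | shadows_collapse m p p' :
      shadows n x y (S m) p p' -> shadows n x y m (collapse m p) (collapse m p').

Lemma shadows_sym n x y m p p' : shadows n x y m p p' -> shadows n y x m p' p.
Proof. induction 1; constructor; assumption. Qed.

Lemma shadows_emb_sqd_le r n x y m p p' : shadows n x y m p p' ->
  emb_sqd r m p p' <= emb_sqd r n (Vert x) (Vert y).
Proof.
  induction 1 as [|m p p' _ IH]; [lra|].
  pose proof (emb_sqd_collapse_le r m p p'). lra.
Qed.

Lemma separated_level_far r n x y i p p' : shadows n x y i p p' -> ~ share i p p' ->
  (r ^ i) ^ 2 / 2 <= emb_sqd r n (Vert x) (Vert y).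
Proof.
  intros Hsh Hsep.
  pose proof (level_sqd_disjoint i p p' Hsep). pose proof (pow2_ge_0 (r ^ i)).
  pose proof (emb_sqd_ge_level r i p p'). pose proof (shadows_emb_sqd_le r _ _ _ _ _ _ Hsh).
  nra.
Qed.

Lemma separation_level n x y m p p' : shadows n x y m p p' -> ~ share m p p' ->
  (exists j q q', shadows n x y (S j) q q' /\ ~ share (S j) q q' /\
                  share j (collapse j q) (collapse j q')) \/
  (exists q q', shadows n x y 0 q q' /\ ~ share 0 q q').
Proof.
  revert p p'; induction m as [|m IH]; intros p p' Hsh Hsep; [right; eauto|].
  destruct (classic (share m (collapse m p) (collapse m p'))) as [Hshare|Hsep'].
  - left. exists m, p, p'. auto.
  - apply (IH _ _ (shadows_collapse _ _ _ _ _ _ Hsh) Hsep').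
Qed.

Inductive lifts : forall m n, Vtype m -> Vtype n -> Prop :=
  | lifts_refl m z : lifts m m z z
  | lifts_up m n z w : lifts (S m) n (inl z) w -> lifts m n z w.

Lemma lifts_le m n z w : lifts m n z w -> (m <= n)%nat.
Proof. induction 1; lia. Qed.

Lemma lifts_unique m n z w1 w2 : lifts m n z w1 -> lifts m n z w2 -> w1 = w2.
Proof.
  intros H1. revert w2. induction H1 as [m z|m n z w H IH]; intros w2 H2.
  - dependent destruction H2; [reflexivity|]. apply lifts_le in H2. lia.
  - dependent destruction H2; [apply lifts_le in H; lia|]. apply IH. assumption.
Qed.

Lemma walk_lifts eps m n a a' : lifts m n a a' -> forall b L, walk eps m a b L ->
  exists b', lifts m n b b' /\ walk eps n a' b' L.
Proof.
  induction 1 as [m z|m n z w _ IH]; intros b L Hab.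
  - exists b. split; [constructor|assumption].
  - destruct (IH _ _ (walk_lift _ _ _ _ _ Hab)) as [b' [Hb Hw]].
    exists b'. split; [constructor|]; assumption.
Qed.

Definition edge_const (r : R) : R := cell_const r + 4 * r ^ 2 / (1 - r ^ 2).

Lemma edge_const_pos r : / 2 < r < 1 -> 0 < edge_const r.
Proof.
  intros Hr. unfold edge_const. pose proof (cell_const_ge4 r (proj1 Hr)).
  assert (0 <= 4 * r ^ 2 / (1 - r ^ 2))
    by (apply Rmult_le_pos; [nra|left; apply Rinv_0_lt_compat; nra]).
  lra.
Qed.

Lemma scale_le_sqrt r a L S : r < 1 -> 0 <= a ->
  L <= 2 * a / (1 - r) -> a ^ 2 / 2 <= S -> (1 - r) / 4 * L <= sqrt S.
Proof.
  intros Hr Ha HL HS. apply Rle_trans with (a / 2).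
  - apply Rmult_le_reg_r with (4 / (1 - r)); [apply Rdiv_lt_0_compat; lra|].
    replace ((1 - r) / 4 * L * (4 / (1 - r))) with L by (field; lra).
    replace (a / 2 * (4 / (1 - r))) with (2 * a / (1 - r)) by (field; lra).
    exact HL.
  - rewrite <- (sqrt_pow2 (a / 2)) by lra. apply sqrt_le_1_alt.
    pose proof (pow2_ge_0 a). lra.
Qed.

Section WeightedDiamond.

Variable eps : R.
Hypothesis eps_range : 0 < eps < / 2.
Local Notation r := (/ 2 + eps).

Lemma r_range : / 2 < r < 1.
Proof. lra. Qed.

Lemma new_edge_bound n e :
  emb_sqd r n (Vert (fst (ends n e))) (Vert (snd (ends n e))) + 4 * (r ^ S n) ^ 2 / (1 - r ^ 2)
  <= edge_const r * (r ^ n) ^ 2.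
Proof.
  pose proof r_range. pose proof (Dn_edge_bound r n e ltac:(lra)).
  unfold edge_const. replace ((r ^ S n) ^ 2) with (r ^ 2 * (r ^ n) ^ 2) by (simpl; ring).
  replace (4 * (r ^ 2 * (r ^ n) ^ 2) / (1 - r ^ 2))
    with (4 * r ^ 2 / (1 - r ^ 2) * (r ^ n) ^ 2) by (field; nra).
  lra.
Qed.

(* An edge of W_n has some weight r^i and is embedded at squared distance <= K r^(2i), with a
   slack 4 r^(2(n+1)) / (1 - r^2) absorbing the levels added later, each of which adds at
   most 4 r^(2(n+1)) to the length of an old edge. *)
Lemma edge_bound n x y w : In (x, y, w) (WE eps n) ->
  exists i, w = r ^ i /\
  emb_sqd r n (Vert x) (Vert y) + 4 * (r ^ S n) ^ 2 / (1 - r ^ 2) <= edge_const r * (r ^ i) ^ 2.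
Proof.
  pose proof r_range. revert x y w.
  induction n as [|m IH]; intros x y w Hxy.
  - apply WE_0 in Hxy as [Hends ->]. exists 0%nat. split; [reflexivity|].
    pose proof (new_edge_bound 0 tt) as Hb. rewrite Hends in Hb. exact Hb.
  - apply WE_S in Hxy as [[x' [y' [-> [-> Hold]]]]|[e [Hends ->]]].
    + destruct (IH _ _ _ Hold) as [i [-> Hi]]. exists i. split; [reflexivity|].
      rewrite emb_sqd_S. cbn [collapse].
      pose proof (level_sqd_vertices (S m) (inl x') (inl y')).
      pose proof (pow2_ge_0 (r ^ S m)).
      replace (4 * (r ^ S (S m)) ^ 2 / (1 - r ^ 2))
        with (4 * (r ^ S m) ^ 2 / (1 - r ^ 2) - 4 * (r ^ S m) ^ 2) by (simpl; field; nra).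
      nra.
    + exists (S m). split; [reflexivity|].
      pose proof (new_edge_bound (S m) e) as Hb. rewrite Hends in Hb. exact Hb.
Qed.

Lemma edge_lipschitz n x y w : In (x, y, w) (WE eps n) ->
  sqrt (emb_sqd r n (Vert x) (Vert y)) <= sqrt (edge_const r) * w.
Proof.
  intros Hxy. pose proof r_range. pose proof (edge_const_pos r ltac:(lra)).
  destruct (edge_bound n x y w Hxy) as [i [Hw Hi]].
  assert (Hw0 : 0 <= w) by (rewrite Hw; apply pow_le; lra).
  assert (0 <= 4 * (r ^ S n) ^ 2 / (1 - r ^ 2))
    by (apply Rmult_le_pos; [pose proof (pow2_ge_0 (r ^ S n)); lra
                            |left; apply Rinv_0_lt_compat; nra]).
  rewrite <- (sqrt_pow2 w), <- sqrt_mult by (try apply pow2_ge_0; lra).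
  apply sqrt_le_1_alt. rewrite <- Hw in Hi. lra.
Qed.

Lemma embedding_lipschitz n x y L : walk eps n x y L ->
  sqrt (emb_sqd r n (Vert x) (Vert y)) <= sqrt (edge_const r) * L.
Proof.
  induction 1 as [x|x y z w L Hxy _ IH].
  - unfold emb_sqd. rewrite sqd_diag, sqrt_0. lra.
  - eapply Rle_trans; [apply (emb_sqd_triangle _ _ _ (Vert y))|].
    assert (sqrt (emb_sqd r n (Vert x) (Vert y)) <= sqrt (edge_const r) * w).
    { destruct Hxy as [Hxy|Hxy]; [exact (edge_lipschitz _ _ _ _ Hxy)|].
      unfold emb_sqd. rewrite sqd_sym. exact (edge_lipschitz _ _ _ _ Hxy). }
    lra.
Qed.

Lemma midpoint_adjacent m e s z : z = fst (ends m e) \/ z = snd (ends m e) ->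
  walk eps (S m) (inr (e, s)) (inl z) (r ^ S m).
Proof.
  assert (Hsub : forall q, walk eps (S m) (fst (ends (S m) (e, q))) (snd (ends (S m) (e, q)))
                                (r ^ S m))
    by (intros q; apply walk_edge; left; apply WE_Dn).
  intros Hz.
  destruct s, Hz as [->| ->];
    [pose proof (Hsub Q_bu) as H | pose proof (Hsub Q_vb) as H
    |pose proof (Hsub Q_ua) as H | pose proof (Hsub Q_av) as H];
    rewrite ends_S in H; cbn [fst snd] in H;
    first [exact H | exact (walk_rev _ _ _ _ _ H)].
Qed.

Lemma collapse_supp_near m (p : point (S m)) z : supp m (collapse m p) z ->
  exists z' L, supp (S m) p z' /\ walk eps (S m) z' (inl z) L /\ L <= r ^ S m.
Proof.
  assert (Hpos : 0 <= r ^ S m) by (apply pow_le; lra).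
  destruct p as [[y|[e s]]|[e q] t]; intros Hz; cbn [collapse supp] in Hz |- *.
  - subst. exists (inl y), 0. split; [reflexivity|split; [apply walk_nil|lra]].
  - exists (inr (e, s)), (r ^ S m).
    split; [reflexivity|split; [apply midpoint_adjacent; exact Hz|lra]].
  - exists (inr (e, match q with Q_ua | Q_av => false | Q_vb | Q_bu => true end)), (r ^ S m).
    split; [rewrite ends_S; destruct q; simpl; auto|].
    split; [apply midpoint_adjacent; exact Hz|lra].
Qed.

(* Each support vertex of the level-m shadow of x is within r^(m+1)/(1-r) of x in W_n
   (a geometric series of steps [collapse_supp_near]). *)
Lemma shadow_support_near n x y m p p' : shadows n x y m p p' ->
  forall z, supp m p z ->
  exists w L, lifts m n z w /\ walk eps n x w L /\ L <= r ^ S m / (1 - r).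
Proof.
  pose proof r_range.
  induction 1 as [|m p p' _ IH]; intros z Hz.
  - simpl in Hz. subst. exists x, 0. repeat split; [constructor|constructor|].
    apply Rmult_le_pos; [apply pow_le; lra|left; apply Rinv_0_lt_compat; lra].
  - destruct (collapse_supp_near m p z Hz) as [z' [L0 [Hz' [Hwalk0 HL0]]]].
    destruct (IH z' Hz') as [w' [L' [Hlift [Hwalk' HL']]]].
    destruct (walk_lifts _ _ _ _ _ Hlift _ _ Hwalk0) as [w [Hlift2 Hwalk2]].
    exists w, (L' + L0). split; [constructor; exact Hlift2|].
    split; [eapply walk_app; eassumption|].
    replace (r ^ S m / (1 - r)) with (r ^ S (S m) / (1 - r) + r ^ S m) by (simpl; field; lra).
    lra.
Qed.

Lemma walk_through_common_support n x y j p p' : shadows n x y j p p' -> share j p p' ->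
  exists L, walk eps n x y L /\ L <= 2 * r ^ S j / (1 - r).
Proof.
  intros Hsh [z [Hz Hz']].
  destruct (shadow_support_near _ _ _ _ _ _ Hsh z Hz) as [w [L [Hlift [Hwalk HL]]]].
  destruct (shadow_support_near _ _ _ _ _ _ (shadows_sym _ _ _ _ _ _ Hsh) z Hz')
    as [w' [L' [Hlift' [Hwalk' HL']]]].
  rewrite (lifts_unique _ _ _ _ _ Hlift' Hlift) in Hwalk'.
  exists (L + L'). split; [eapply walk_app; [exact Hwalk|apply walk_rev; exact Hwalk']|].
  unfold Rdiv in *. lra.
Qed.

Lemma root_walk (a b : Vtype 0) : exists L, walk eps 0 a b L /\ L <= 1.
Proof.
  destruct (Bool.bool_dec a b) as [<-|Hab].
  - exists 0. split; [constructor|lra].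
  - exists 1. split; [|lra]. apply walk_edge.
    destruct a, b; try contradiction; simpl; auto.
Qed.

Lemma walk_through_root n x y p p' : shadows n x y 0 p p' ->
  exists L, walk eps n x y L /\ L <= 2 / (1 - r).
Proof.
  pose proof r_range. intros Hsh.
  destruct (supp_inhabited 0 p) as [a Ha]. destruct (supp_inhabited 0 p') as [b Hb].
  destruct (shadow_support_near _ _ _ _ _ _ Hsh a Ha) as [wa [La [Hla [Hwa HLa]]]].
  destruct (shadow_support_near _ _ _ _ _ _ (shadows_sym _ _ _ _ _ _ Hsh) b Hb)
    as [wb [Lb [Hlb [Hwb HLb]]]].
  destruct (root_walk a b) as [L0 [Hw0 HL0]].
  destruct (walk_lifts _ _ _ _ _ Hla _ _ Hw0) as [wb' [Hlb' Hwab]].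
  rewrite (lifts_unique _ _ _ _ _ Hlb' Hlb) in Hwab.
  exists (La + L0 + Lb).
  split; [eapply walk_app; [eapply walk_app; eassumption|apply walk_rev; exact Hwb]|].
  replace (r ^ 1) with r in HLa, HLb by ring.
  replace (2 / (1 - r)) with (2 * (r / (1 - r)) + 2) by (field; lra).
  lra.
Qed.

Lemma separated_scale n x y : ~ share n (Vert x) (Vert y) ->
  exists i L, walk eps n x y L /\ L <= 2 * r ^ i / (1 - r) /\
              (r ^ i) ^ 2 / 2 <= emb_sqd r n (Vert x) (Vert y).
Proof.
  pose proof r_range. intros Hsep.
  destruct (separation_level _ _ _ _ _ _ (shadows_top n x y) Hsep)
    as [[j [q [q' [Hsh [Hnsh Hmeet]]]]]|[q [q' [Hsh Hnsh]]]].
  - destruct (walk_through_common_support _ _ _ _ _ _ (shadows_collapse _ _ _ _ _ _ Hsh) Hmeet)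
      as [L [Hw HL]].
    exists (S j), L. split; [exact Hw|split; [exact HL|]].
    exact (separated_level_far _ _ _ _ _ _ _ Hsh Hnsh).
  - destruct (walk_through_root _ _ _ _ _ Hsh) as [L [Hw HL]].
    exists 0%nat, L. split; [exact Hw|split; [simpl; lra|]].
    exact (separated_level_far _ _ _ _ _ _ _ Hsh Hnsh).
Qed.

Lemma walk_lower n x y : exists L, walk eps n x y L /\
  (1 - r) / 4 * L <= sqrt (emb_sqd r n (Vert x) (Vert y)).
Proof.
  pose proof r_range.
  destruct (classic (share n (Vert x) (Vert y))) as [[z [Hx Hy]]|Hsep].
  - simpl in Hx, Hy. subst. exists 0. split; [constructor|].
    rewrite Rmult_0_r. apply sqrt_pos.
  - destruct (separated_scale n x y Hsep) as [i [L [Hw [HL Hfar]]]].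
    exists L. split; [exact Hw|].
    exact (scale_le_sqrt r (r ^ i) L _ ltac:(lra) (pow_le r i ltac:(lra)) HL Hfar).
Qed.

End WeightedDiamond.

Lemma infinite_sum_finite (u : nat -> R) N : (forall i, (N <= i)%nat -> u i = 0) ->
  infinite_sum u (sum_f_R0 u N).
Proof.
  intros Hzero e He. exists N. intros k Hk.
  replace (sum_f_R0 u k) with (sum_f_R0 u N).
  - unfold Rdist. rewrite Rminus_diag, Rabs_R0. exact He.
  - induction Hk as [|k Hk IH]; [reflexivity|].
    simpl. rewrite <- IH, (Hzero (S k)) by lia. ring.
Qed.

Lemma in_l2_list (l : list R) : in_l2 (fun k => nth k l 0).
Proof.
  exists (sum_f_R0 (fun k => nth k l 0 ^ 2) (length l)).
  apply infinite_sum_finite. intros k Hk. rewrite nth_overflow by lia. ring.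
Qed.

Lemma sum_f_R0_nth_sqd l1 l2 : length l1 = length l2 ->
  sum_f_R0 (fun k => (nth k l1 0 - nth k l2 0) ^ 2) (length l1) = sqd l1 l2.
Proof.
  revert l2; induction l1 as [|a l1 IH]; intros [|b l2] Hlen; try discriminate.
  - simpl. ring.
  - cbn [length] in *. rewrite decomp_sum by lia. cbn [sqd nth pred].
    rewrite <- (IH l2) by lia. reflexivity.
Qed.

Lemma l2_sqdist_list l1 l2 S : length l1 = length l2 ->
  l2_sqdist (fun k => nth k l1 0) (fun k => nth k l2 0) S -> S = sqd l1 l2.
Proof.
  intros Hlen HS. rewrite <- sum_f_R0_nth_sqd by exact Hlen.
  eapply uniqueness_sum; [exact HS|]. apply infinite_sum_finite.
  intros k Hk. rewrite !nth_overflow by lia. ring.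
Qed.

Lemma le_mult_inf (P : R -> Prop) d Q M : 0 < M ->
  (forall e, 0 < e -> exists L, P L /\ L < d + e) ->
  (forall L, P L -> Q <= M * L) -> Q <= M * d.
Proof.
  intros HM Hinf Hall. apply Rnot_lt_le. intros Hlt.
  destruct (Hinf ((Q - M * d) / M)) as [L [HL HLd]]; [apply Rdiv_lt_0_compat; lra|].
  specialize (Hall L HL).
  assert (M * L < M * (d + (Q - M * d) / M)) by (apply Rmult_lt_compat_l; assumption).
  replace (M * (d + (Q - M * d) / M)) with Q in * by (field; lra). lra.
Qed.

Theorem mainTheorem12 :
  forall eps : R, 0 < eps < /2 ->
  exists C : R,
    forall n : nat,
      exists f : Vtype n -> nat -> R,
        (forall x, in_l2 (f x)) /\
        exists s : R, 0 < s /\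
          forall (x y : Vtype n) (d S : R),
            is_dist eps n x y d -> l2_sqdist (f x) (f y) S ->
            s * d <= sqrt S <= C * s * d.
Proof.
  intros eps Heps.
  set (r := / 2 + eps). set (s := (1 - r) / 4). set (M := sqrt (edge_const r)).
  assert (Hs : 0 < s) by (unfold s, r; lra).
  assert (HM : 0 < M) by (apply sqrt_lt_R0, edge_const_pos; unfold r; lra).
  exists (M / s). intros n.
  exists (fun x k => nth k (coords r n (Vert x)) 0).
  split; [intros x; apply in_l2_list|].
  exists s. split; [exact Hs|].
  intros x y d S [Hd_le Hd_inf] HS.
  apply l2_sqdist_list in HS; [|apply coords_length]. subst S.
  split.
  - destruct (walk_lower eps Heps n x y) as [L [Hw HL]].
    apply Rle_trans with (s * L); [|exact HL].
    apply Rmult_le_compat_l; [lra|exact (Hd_le L Hw)].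
  - replace (M / s * s * d) with (M * d) by (field; lra).
    apply (le_mult_inf (walk eps n x y)); [exact HM|exact Hd_inf|].
    intros L Hw. exact (embedding_lipschitz eps Heps n x y L Hw).
Qed.
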